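(* Let $\Omega\subset\mathbb{R}^2$, integers $N,M\ge 1$, a node deployment $\mathbf{P}=(p_1,\dots,p_{N+M})$, a cell partitioning $\mathbf{W}=(W_1,\dots,W_N)$ of $\Omega$ and a normalized flow matrix $\mathbf{S}$ be as described in the context, with flows $F_{i,j}=F_{i,j}(\mathbf{W},\mathbf{S})$ and AP power coefficients $g_n(\mathbf{P},\mathbf{S})$. Then $$\sum_{n=1}^{N}g_n(\mathbf{P},\mathbf{S})\,R_b\int_{W_n}f(\omega)\,d\omega=\sum_{i=1}^{N}\Big[\sum_{j=1}^{N+M}\beta_{i,j}\|p_i-p_j\|^2F_{i,j}(\mathbf{W},\mathbf{S})+\sum_{j=1}^{N}\rho_jF_{i,j}(\mathbf{W},\mathbf{S})\Big].$$
   Context: Let $\Omega\subset\mathbb{R}^2$ be a convex polygon (including its interior). Let $N,M\ge1$ be integers; $\mathcal{I_A}=\{1,\dots,N\}$ indexes access points (APs) and $\mathcal{I_F}=\{N+1,\dots,N+M\}$ indexes fusion centers (FCs). A node deployment is $\mathbf{P}=(p_1,\dots,p_{N+M})$ with $p_n\in\Omega$. Let $f:\Omega\to\mathbb{R}^+$ be continuous and differentiable and let $R_b>0$ be a constant. A cell partitioning $\mathbf{W}=(W_1,\dots,W_N)$ is a partition of $\Omega$ into Borel sets; write $v(W_n)=\int_{W_n}f(\omega)d\omega$. A normalized flow matrix $\mathbf{S}=[s_{i,j}]$, $i\in\mathcal{I_A}$, $j\in\mathcal{I_A}\cup\mathcal{I_F}$, satisfies $s_{i,j}\in[0,1]$,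 $\sum_{j=1}^{N+M}s_{i,j}=1$ for every $i\in\mathcal{I_A}$, and has no cycles: whenever $l_0,\dots,l_K$ satisfy $\prod_{k=1}^K s_{l_{k-1},l_k}>0$ then $s_{l_K,l_0}=0$ (in particular $s_{i,i}=0$). The flows $F_{i,j}(\mathbf{W},\mathbf{S})$ ($i\in\mathcal{I_A}$, $j\in\mathcal{I_A}\cup\mathcal{I_F}$) are the unique numbers with $F_{i,j}=s_{i,j}F_i$, where $F_i=\sum_{j=1}^{N+M}F_{i,j}$ satisfies $F_i=R_b v(W_i)+\sum_{j=1}^N F_{j,i}$. Positive constants $\eta_n$ ($n\in\mathcal{I_A}$), $\beta_{i,j}$ ($i\in\mathcal{I_A}$, $j\in\mathcal{I_A}\cup\mathcal{I_F}$) and nonnegative constants $\rho_n$ ($n\in\mathcal{I_A}$) are given. AP power coefficient: for $n\in\mathcal{I_A}$, consider all directed paths $L: n=l_0\to l_1\to\cdots\to l_J$ with $l_0,\dots,l_{J-1}\in\mathcal{I_A}$, $l_J\in\mathcal{I_F}$ and $\prod_{i=1}^J s_{l_{i-1},l_i}>0$; then $$g_n(\mathbf{P},\mathbf{S})=\sum_{L}\Big[\prod_{i=1}^{J}s_{l_{i-1},l_i}\Big(\sum_{j=1}^{J}\beta_{l_{j-1},l_j}\|p_{l_{j-1}}-p_{l_j}\|^2+\sum_{j=1}^{J-1}\rho_{l_j}\Big)\Big].$$ *)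

From HB Require Import structures.
From mathcomp Require Import all_boot all_order all_algebra.
From mathcomp Require Import all_classical all_reals all_analysis.
Import Order.TTheory GRing.Theory Num.Theory.
Import numFieldNormedType.Exports.

Set Implicit Arguments.
Unset Strict Implicit.
Unset Printing Implicit Defensive.

Local Open Scope classical_set_scope.
Local Open Scope ring_scope.

(* Nodes are indexed by 'I_(N+M) (0-based): the access points (APs) are
   ap i = i for i : 'I_N, the fusion centers (FCs) are fc k = N + k for k : 'I_M. *)
Definition ap {N M : nat} (i : 'I_N) : 'I_(N + M) := lshift M i.
Definition fc {N M : nat} (k : 'I_M) : 'I_(N + M) := rshift N k.

Definition dist2 {R : realType} (x y : R * R) : R :=
  (x.1 - y.1) ^+ 2 + (x.2 - y.2) ^+ 2.

Definition conv_hull {R : realType} (V : seq (R * R)) : set (R * R) :=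
  [set x | exists lam : 'I_(size V) -> R,
     (forall i, 0 <= lam i) /\ \sum_i lam i = 1 /\
     x.1 = \sum_i lam i * (nth (0, 0) V i).1 /\
     x.2 = \sum_i lam i * (nth (0, 0) V i).2].

Definition convex_polygon {R : realType} (Omega : set (R * R)) : Prop :=
  exists V : seq (R * R), Omega = conv_hull V /\ (interior Omega) !=set0.

Definition leb2 {R : realType} :=
  ((@lebesgue_measure R) \x (@lebesgue_measure R))%E.

Definition vol {R : realType} (f : R * R -> R) (W : set (R * R)) : R :=
  Rintegral leb2 W f.

Definition cell_partition {R : realType} {N : nat} (Omega : set (R * R))
    (W : 'I_N -> set (R * R)) : Prop :=
  (forall n, measurable (W n)) /\
  (forall n m, n != m -> W n `&` W m = set0) /\
  (\bigcup_n W n = Omega).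

Fixpoint pprod {R : realType} {N M : nat} (s : 'I_N -> 'I_(N + M) -> R)
    (x : 'I_N) (ls : seq 'I_N) : R :=
  if ls is y :: t then s x (ap y) * pprod s y t else 1.

Definition normalized_flow_matrix {R : realType} {N M : nat}
    (s : 'I_N -> 'I_(N + M) -> R) : Prop :=
  (forall i j, 0 <= s i j <= 1) /\
  (forall i, \sum_j s i j = 1) /\
  (* no cycles: if prod_{k=1}^K s_{l_{k-1},l_k} > 0 then s_{l_K,l_0} = 0 *)
  (forall (l0 : 'I_N) (ls : seq 'I_N),
      0 < pprod s l0 ls -> s (last l0 ls) (ap l0) = 0).

Definition is_flow {R : realType} {N M : nat} (s : 'I_N -> 'I_(N + M) -> R)
    (Rb : R) (v : 'I_N -> R) (F : 'I_N -> 'I_(N + M) -> R) : Prop :=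
  (forall i j, F i j = s i j * \sum_k F i k) /\
  (forall i, \sum_k F i k = Rb * v i + \sum_(j : 'I_N) F j (ap i)).

(* A directed path n = l_0 -> l_1 -> ... -> l_J with l_0..l_{J-1} APs and
   l_J an FC is encoded as L = (ls, k) with ls = [l_1; ...; l_{J-1}] (APs)
   and l_J = fc k. *)
Definition path_prod {R : realType} {N M : nat} (s : 'I_N -> 'I_(N + M) -> R)
    (n : 'I_N) (L : seq 'I_N * 'I_M) : R :=
  pprod s n L.1 * s (last n L.1) (fc L.2).

Fixpoint pcost {R : realType} {N M : nat} (beta : 'I_N -> 'I_(N + M) -> R)
    (p : 'I_(N + M) -> R * R) (x : 'I_N) (ls : seq 'I_N) : R :=
  if ls is y :: t then
    beta x (ap y) * dist2 (p (ap x)) (p (ap y)) + pcost beta p y t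
  else 0.

Definition path_cost {R : realType} {N M : nat} (beta : 'I_N -> 'I_(N + M) -> R)
    (rho : 'I_N -> R) (p : 'I_(N + M) -> R * R) (n : 'I_N)
    (L : seq 'I_N * 'I_M) : R :=
  pcost beta p n L.1
  + beta (last n L.1) (fc L.2) * dist2 (p (ap (last n L.1))) (p (fc L.2))
  + \sum_(y <- L.1) rho y.

Definition paths_from {R : realType} {N M : nat} (s : 'I_N -> 'I_(N + M) -> R)
    (n : 'I_N) : set (seq 'I_N * 'I_M) :=
  [set L | 0 < path_prod s n L].

(* AP power coefficient g_n(P,S): finitely supported sum over all such paths
   (the set of paths is finite because S has no cycles). *)
Definition g_coef {R : realType} {N M : nat} (s : 'I_N -> 'I_(N + M) -> R)
    (beta : 'I_N -> 'I_(N + M) -> R) (rho : 'I_N -> R)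
    (p : 'I_(N + M) -> R * R) (n : 'I_N) : R :=
  \sum_(L \in paths_from s n) path_prod s n L * path_cost beta rho p n L.

From HB Require Import structures.
From mathcomp Require Import all_boot all_order all_algebra.
From mathcomp Require Import all_classical all_reals all_analysis.
From mathcomp Require Import ring.
Import Order.TTheory GRing.Theory Num.Theory.
Import numFieldNormedType.Exports.

Set Implicit Arguments.
Unset Strict Implicit.
Unset Printing Implicit Defensive.
Local Open Scope classical_set_scope.
Local Open Scope ring_scope.

(* Read S as the transition matrix of a random walk on the APs that is absorbed
   at the FCs. Acyclicity makes every walk simple, so it is absorbed after fewer
   than N steps; hence the path products from n sum to 1 and g_n is the expected
   cost of a walk started at n, which satisfies the first-step recursion
   g_n = c_n + sum_y s_{n,y} g_y with c_n the expected cost of the first hop.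
   Writing R_b v(W_n) = F_n - sum_j s_{j,n} F_j, the sum of g_n R_b v(W_n)
   telescopes to sum_i F_i c_i, which is the right-hand side. *)

Section SeqEnumeration.
Variable T : finType.

Fixpoint short_seqs (d : nat) : seq (seq T) :=
  if d is d'.+1 then [::] :: [seq y :: t | y <- index_enum T, t <- short_seqs d']
  else [::].

Fixpoint seqs_of_size (d : nat) : seq (seq T) :=
  if d is d'.+1 then [seq y :: t | y <- index_enum T, t <- seqs_of_size d']
  else [:: [::]].

Lemma mem_short_seqs d t : (t \in short_seqs d) = (size t < d)%N.
Proof.
elim: d t => [|d IH] [|y t] //=; rewrite in_cons //=.
apply/allpairsP/idP => [[[y' t'] [_ /= t'_in [_ ->]]]|size_t].
  by rewrite ltnS -IH.
by exists (y, t); rewrite mem_index_enum IH -ltnS.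
Qed.

Lemma uniq_short_seqs d : uniq (short_seqs d).
Proof.
elim: d => [|d IH] //=; apply/andP; split.
  by apply/negP => /allpairsP [[y t] [_ _]].
apply: allpairs_uniq => //; first exact: index_enum_uniq.
by move=> [a b] [c e] _ _ /= [-> ->].
Qed.

Lemma size_seqs_of_size d t : t \in seqs_of_size d -> size t = d.
Proof.
elim: d t => [|d IH] t /=; first by rewrite inE => /eqP ->.
by case/allpairsP => [[y t'] [_ /= /IH <- ->]].
Qed.

Lemma big_short_seqsS {V : zmodType} d (H : seq T -> V) :
  \sum_(t <- short_seqs d.+1) H t = H [::] + \sum_y \sum_(t <- short_seqs d) H (y :: t).
Proof. by rewrite /= big_cons big_allpairs_dep. Qed.

Lemma big_seqs_of_sizeS {V : zmodType} d (H : seq T -> V) :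
  \sum_(t <- seqs_of_size d.+1) H t = \sum_y \sum_(t <- seqs_of_size d) H (y :: t).
Proof. by rewrite /= big_allpairs_dep. Qed.

End SeqEnumeration.

Lemma big_split_nodes {R : zmodType} {N M : nat} (H : 'I_(N + M) -> R) :
  \sum_j H j = \sum_(y < N) H (ap y) + \sum_(k < M) H (fc k).
Proof. exact: big_split_ord. Qed.

Section PathProducts.
Variables (R : realType) (N M : nat) (s : 'I_N -> 'I_(N + M) -> R).
Hypothesis s_ge0 : forall i j, 0 <= s i j.

Lemma pprod_ge0 x t : 0 <= pprod s x t.
Proof. by elim: t x => [|y t IH] x //=; rewrite mulr_ge0. Qed.

Lemma pprod_cat x a b : pprod s x (a ++ b) = pprod s x a * pprod s (last x a) b.
Proof. by elim: a x => [|y a IH] x /=; rewrite ?mul1r // IH mulrA. Qed.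

Lemma pprod_cons_gt0 {x y t} :
  0 < pprod s x (y :: t) -> 0 < s x (ap y) /\ 0 < pprod s y t.
Proof. by rewrite /= mulr_ge0_gt0 ?pprod_ge0 // => /andP. Qed.

Lemma path_prod_gt0 {n L} : 0 < path_prod s n L -> 0 < pprod s n L.1.
Proof. by rewrite /path_prod mulr_ge0_gt0 ?pprod_ge0 // => /andP[]. Qed.

Lemma path_prod_cons n y t k :
  path_prod s n (y :: t, k) = s n (ap y) * path_prod s y (t, k).
Proof. by rewrite /path_prod /= mulrA. Qed.

Lemma path_prod_nil n k : path_prod s n ([::], k) = s n (fc k).
Proof. by rewrite /path_prod /= mul1r. Qed.

Hypothesis s_acyclic : forall (l0 : 'I_N) ls,
  0 < pprod s l0 ls -> s (last l0 ls) (ap l0) = 0.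

Lemma pprod_gt0_uniq x t : 0 < pprod s x t -> uniq (x :: t).
Proof.
elim: t x => [|y t IH] x // pos_xt.
have [_ pos_yt] := pprod_cons_gt0 pos_xt.
rewrite /= -/(uniq (y :: t)) IH // andbT; apply/negP => x_in_yt.
move: pos_xt; case/splitPr: x_in_yt => u w.
rewrite pprod_cat mulr_ge0_gt0 ?pprod_ge0 // => /andP[pos_u].
by case/pprod_cons_gt0; rewrite s_acyclic // ltxx.
Qed.

Lemma pprod_gt0_size x t : 0 < pprod s x t -> (size t < N)%N.
Proof.
move/pprod_gt0_uniq/card_uniqP => card_xt.
by have := max_card (mem (x :: t)); rewrite card_ord card_xt.
Qed.

Lemma sum_pprod_seqs_of_size d n :
  (N <= d)%N -> \sum_(t <- seqs_of_size 'I_N d) pprod s n t = 0.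
Proof.
move=> le_Nd; rewrite big_seq big1 // => t /size_seqs_of_size size_t.
apply/eqP; rewrite eq_le pprod_ge0 andbT leNgt; apply/negP.
by move/pprod_gt0_size; rewrite size_t ltnNge le_Nd.
Qed.

Variables (beta : 'I_N -> 'I_(N + M) -> R) (rho : 'I_N -> R)
  (p : 'I_(N + M) -> R * R).

Lemma path_cost_cons n y t k :
  path_cost beta rho p n (y :: t, k) =
  beta n (ap y) * dist2 (p (ap n)) (p (ap y)) + rho y + path_cost beta rho p y (t, k).
Proof. rewrite /path_cost /= big_cons; ring. Qed.

Lemma path_cost_nil n k :
  path_cost beta rho p n ([::], k) = beta n (fc k) * dist2 (p (ap n)) (p (fc k)).
Proof. by rewrite /path_cost /= big_nil add0r addr0. Qed.

Definition path_mass_lt d n :=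
  \sum_(t <- short_seqs 'I_N d) \sum_k path_prod s n (t, k).

Definition g_coef_lt d n :=
  \sum_(t <- short_seqs 'I_N d) \sum_k
    path_prod s n (t, k) * path_cost beta rho p n (t, k).

Lemma g_coef_ltS d n : g_coef_lt d.+1 n =
  \sum_k s n (fc k) * (beta n (fc k) * dist2 (p (ap n)) (p (fc k)))
  + \sum_y s n (ap y) * ((beta n (ap y) * dist2 (p (ap n)) (p (ap y)) + rho y)
                          * path_mass_lt d y + g_coef_lt d y).
Proof.
rewrite /g_coef_lt big_short_seqsS; congr (_ + _).
  by apply: eq_bigr => k _; rewrite path_prod_nil path_cost_nil.
apply: eq_bigr => y _; rewrite mulrDr mulrA !mulr_sumr -big_split.
apply: eq_bigr => t _; rewrite !mulr_sumr -big_split; apply: eq_bigr => k _.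
rewrite path_prod_cons path_cost_cons /=; ring.
Qed.

Lemma g_coef_lt_eq d n : (N <= d)%N -> g_coef s beta rho p n = g_coef_lt d n.
Proof.
move=> le_Nd; rewrite /g_coef.
rewrite (fsbig_fwiden [seq (t, k) | t <- short_seqs 'I_N d, k <- index_enum 'I_M]).
- by rewrite big_allpairs_dep.
- move=> [t k] /= pos_tk; apply/allpairsP; exists (t, k).
  rewrite mem_index_enum mem_short_seqs (leq_trans _ le_Nd) //.
  exact: pprod_gt0_size (path_prod_gt0 pos_tk).
- apply: allpairs_uniq; [exact: uniq_short_seqs|exact: index_enum_uniq|].
  by move=> [a b] [c e] _ _ /= [-> ->].
- move=> [t k] [_ /= not_pos]; apply/eqP; rewrite mulf_eq0; apply/orP; left.
  by rewrite eq_le mulr_ge0 ?pprod_ge0 // andbT leNgt; apply/negP.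
Qed.

Hypothesis s_row_sum : forall i, \sum_j s i j = 1.

(* Mass absorbed within fewer than d hops plus mass still travelling after d hops. *)
Lemma path_mass_lt_conservation d n :
  path_mass_lt d n + \sum_(t <- seqs_of_size 'I_N d) pprod s n t = 1.
Proof.
elim: d n => [|d IH] n.
  by rewrite /path_mass_lt /= big_nil big_seq1 add0r.
rewrite /path_mass_lt big_short_seqsS big_seqs_of_sizeS -(s_row_sum n).
rewrite big_split_nodes -addrA [RHS]addrC; congr (_ + _).
  by apply: eq_bigr => k _; rewrite path_prod_nil.
rewrite -big_split; apply: eq_bigr => y _.
rewrite -[RHS]mulr1 -(IH y) mulrDr !mulr_sumr; congr (_ + _).
apply: eq_bigr => t _; rewrite mulr_sumr; apply: eq_bigr => k _.
exact: path_prod_cons.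
Qed.

Lemma path_mass_lt_eq1 d n : (N <= d)%N -> path_mass_lt d n = 1.
Proof.
by move=> le_Nd; rewrite -(@path_mass_lt_conservation d n) sum_pprod_seqs_of_size ?addr0.
Qed.

Lemma g_coef_rec n : g_coef s beta rho p n =
  \sum_j s n j * (beta n j * dist2 (p (ap n)) (p j))
  + \sum_y s n (ap y) * (rho y + g_coef s beta rho p y).
Proof.
rewrite (@g_coef_lt_eq N.+1 n (leqnSn N)) g_coef_ltS big_split_nodes.
rewrite [RHS]addrAC [LHS]addrC -big_split; congr (_ + _); apply: eq_bigr => y _ /=.
by rewrite path_mass_lt_eq1 // (@g_coef_lt_eq N y (leqnn N)); ring.
Qed.

End PathProducts.

Section FlowPotential.
Variables (R : realType) (N M : nat) (s : 'I_N -> 'I_(N + M) -> R).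
Variables (Rb : R) (v : 'I_N -> R) (F : 'I_N -> 'I_(N + M) -> R).
Hypothesis F_flow : is_flow s Rb v F.

Lemma sum_potential_flow (g c : 'I_N -> R) :
  (forall i, g i = c i + \sum_y s i (ap y) * g y) ->
  \sum_n g n * (Rb * v n) = \sum_i c i * \sum_k F i k.
Proof.
case: F_flow => F_split F_balance g_step.
have inflow n : Rb * v n = \sum_k F n k - \sum_j s j (ap n) * \sum_k F j k.
  under [X in _ - X]eq_bigr => j _ do rewrite -F_split.
  by rewrite F_balance addrK.
under eq_bigr => n _ do rewrite inflow mulrBr [X in _ - X]mulr_sumr.
rewrite sumrB exchange_big -sumrB; apply: eq_bigr => i _ /=.
rewrite g_step mulrDl mulr_suml -addrA -sumrB [X in _ + X]big1 ?addr0 // => y _.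
ring.
Qed.

End FlowPotential.

Theorem lemma1 (R : realType) (Omega : set (R * R)) (N M : nat)
    (p : 'I_(N + M) -> R * R) (f : R * R -> R) (Rb : R)
    (W : 'I_N -> set (R * R)) (s : 'I_N -> 'I_(N + M) -> R)
    (beta : 'I_N -> 'I_(N + M) -> R) (rho : 'I_N -> R)
    (F : 'I_N -> 'I_(N + M) -> R) :
  convex_polygon Omega ->
  (0 < N)%N -> (0 < M)%N ->
  (forall n, p n \in Omega) ->
  (forall x, x \in Omega -> 0 < f x) ->
  {within Omega, continuous f} ->
  (forall x, x \in Omega -> differentiable f x) ->
  0 < Rb ->
  cell_partition Omega W ->
  normalized_flow_matrix s ->
  (forall i j, 0 < beta i j) ->
  (forall n, 0 <= rho n) ->
  is_flow s Rb (fun n => vol f (W n)) F ->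
  \sum_(n < N) g_coef s beta rho p n * (Rb * vol f (W n)) =
  \sum_(i < N) (\sum_(j < N + M) beta i j * dist2 (p (ap i)) (p j) * F i j
                + \sum_(j < N) rho j * F i (ap j)).
Proof.
move=> _ _ _ _ _ _ _ _ _ [s_bounds [s_row_sum s_acyclic]] _ _ F_flow.
have s_ge0 i j : 0 <= s i j by case/andP: (s_bounds i j).
rewrite (sum_potential_flow F_flow (g := g_coef s beta rho p) (c := fun i =>
  \sum_j s i j * (beta i j * dist2 (p (ap i)) (p j)) + \sum_y s i (ap y) * rho y)).
  case: F_flow => F_split _; apply: eq_bigr => i _.
  rewrite mulrDl !mulr_suml; congr (_ + _); apply: eq_bigr => j _;
    rewrite F_split; ring.
move=> n; rewrite g_coef_rec // -addrA; congr (_ + _).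
by rewrite -big_split; apply: eq_bigr => y _ /=; rewrite mulrDr.
Qed.
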